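(* For $\beta\in\mathbb{N}$, $n\in\mathbb{N}$, $r\in\mathbb{Z}$ let $$T_{0,\beta}^{(2)}(n,r)=\frac{1}{\lfloor n/2^{\beta-1}\rfloor!}\sum_{k\equiv r\ (\mathrm{mod}\ 2^{\beta})}\binom nk(-1)^k.$$ Let $\alpha\in\mathbb{N}$, $n\in\mathbb{Z}^+$, $r\in\mathbb{Z}$ with $n\equiv r\equiv0\pmod{2^{\alpha}}$. Then $T_{0,\alpha+1}^{(2)}(n,r)\equiv1\pmod 2$ if and only if $n$ is a power of $2$.
   Context: The sum runs over all integers $k\equiv r\pmod{2^\beta}$ with $\binom nk=0$ unless $0\le k\le n$. For rationals $u,v$, $u\equiv v\pmod 2$ means $\operatorname{ord}_2(u-v)\ge1$. *)

From mathcomp Require Import all_boot all_order all_algebra.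
Set Implicit Arguments. Unset Strict Implicit. Unset Printing Implicit Defensive.
Import Order.TTheory GRing.Theory Num.Theory.
Local Open Scope ring_scope.

(* floor(n / 2^(beta-1)) for beta : nat; equals (2n) div 2^beta
   (also correct for beta = 0, where 2^(-1) = 1/2). *)
Definition floor_div_pow2m1 (beta n : nat) : nat := ((2 * n) %/ 2 ^ beta)%N.

(* T^{(2)}_{0,beta}(n,r) = 1/floor(n/2^(beta-1))! *
   sum_{k = r mod 2^beta} C(n,k) (-1)^k ; C(n,k)=0 outside 0<=k<=n. *)
Definition T2 (beta n : nat) (r : int) : rat :=
  (((floor_div_pow2m1 beta n)`!)%:R)^-1 *
  \sum_(0 <= k < n.+1 | ((k%:Z - r) %% (2 ^ beta)%:Z)%Z == 0)
     ('C(n, k)%:R * (-1) ^+ k).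

Definition ord2 (x : rat) : int :=
  (logn 2 `|numq x|%N)%:Z - (logn 2 `|denq x|%N)%:Z.

(* u = v (mod 2) for rationals: ord_2(u - v) >= 1 (ord_2 0 = +oo). *)
Definition rat_cong2 (u v : rat) : Prop :=
  (u - v == 0) \/ (1 <= ord2 (u - v)).

(* Write n = 2^alpha m and u = 1 - X^(2^alpha).  Since (1 - X)^(2^alpha) = u mod 2,
   (1 - X)^n = (u + 2h)^m, and the sum in T is the residue sum modulo 2^(alpha+1) of
   this polynomial, which kills the multiples of X^(2^(alpha+1)) - 1 = u^2 - 2u.
   Modulo u^2 - 2u the power (u + 2h)^m is divisible by 2^(m-1); for m = 2^j the
   quotient is u + 2D, whose residue sum is odd because exactly one of 0 and 2^alpha
   is congruent to r.  As v_2(m!) <= m - 1, with equality iff m is a power of 2,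
   T is a 2-adic unit, i.e. T = 1 mod 2, iff m (equivalently n) is a power of 2. *)

From HB Require Import structures.
From mathcomp Require Import all_boot all_order all_algebra.
From mathcomp Require Import ring zify.
Set Implicit Arguments. Unset Strict Implicit. Unset Printing Implicit Defensive.
Import Order.TTheory GRing.Theory Num.Theory.

Lemma pnat_expP p n : prime p -> reflect (exists k, n = p ^ k) (p.-nat n).
Proof.
move=> p_pr; apply: (iffP idP) => [/p_natP[k ->] | [k ->]]; first by exists k.
by rewrite pnatX pnat_id.
Qed.

Lemma logn2_odd m : odd m -> logn 2 m = 0.
Proof. by move=> odd_m; rewrite logn_coprime // coprime2n. Qed.

Lemma logn2_double t : 0 < t -> logn 2 t.*2 = (logn 2 t).+1.
Proof. by move=> t_gt0; rewrite -mul2n lognM // lognn. Qed.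

Lemma logn2_fact_double t : logn 2 (t.*2)`! = t + logn 2 t`!.
Proof.
elim: t => [|t IHt] //; rewrite doubleS !factS !lognM ?muln_gt0 ?fact_gt0 //.
by rewrite IHt -doubleS logn2_double // (@logn2_odd t.*2.+1) ?odd_double //; lia.
Qed.

Lemma pnat2_double t : 2.-nat t.*2 = 2.-nat t.
Proof. by rewrite -mul2n pnatM pnat_id. Qed.

Lemma pnat2_doubleS t : 2.-nat t.*2.+1 = (t == 0).
Proof.
case: t => [|t] //; apply/negbTE/negP => two_nat.
have := pnat_1 two_nat; rewrite -odd_2'nat /= odd_double => /(_ isT).
by rewrite doubleS.
Qed.

(* By Legendre, v_2(m!) = m - s_2(m) with s_2 the binary digit sum. *)
Lemma logn2_fact_leqif m : 0 < m -> (logn 2 m`!).+1 <= m ?= iff 2.-nat m.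
Proof.
elim/ltn_ind: m => m IHm m_gt0; have lt_half : m./2 < m by rewrite -divn2 ltn_Pdiv.
have := odd_double_half m; set t := m./2 in lt_half *.
case: (odd m) => /= eq_m; rewrite -eq_m in m_gt0 *.
  rewrite factS lognM ?fact_gt0 // (@logn2_odd t.*2.+1) /= ?odd_double //.
  rewrite logn2_fact_double pnat2_doubleS.
  have [-> | t_gt0] := posnP t; first by rewrite fact0 logn1.
  have [le_t _] := IHm _ lt_half t_gt0.
  by split; lia.
have t_gt0 : 0 < t by move: m_gt0; lia.
rewrite logn2_fact_double pnat2_double; have [le_t <-] := IHm _ lt_half t_gt0.
by split; [lia | apply/eqP/eqP; lia].
Qed.

Local Open Scope ring_scope.

Definition cong_mod (N : nat) (r : int) (k : nat) : bool :=
  ((k%:Z - r) %% N%:Z)%Z == 0.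

Lemma cong_modDr N r k : cong_mod N r (k + N) = cong_mod N r k.
Proof. by rewrite /cong_mod PoszD addrAC modzDr. Qed.

Section ResidueSum.
Variables (R : nzRingType) (N : nat) (r : int).

Definition residue_sum (p : {poly R}) : R :=
  \sum_(0 <= k < size p | cong_mod N r k) p`_k.

Lemma residue_sum_widen B (p : {poly R}) : (size p <= B)%N ->
  residue_sum p = \sum_(0 <= k < B | cong_mod N r k) p`_k.
Proof.
move=> le_pB; rewrite (big_cat_nat (n := size p)) //= [X in _ + X]big_nat_cond.
rewrite [X in _ + X]big1 ?addr0 //.
by move=> k /andP[/andP[le_pk _] _]; rewrite nth_default.
Qed.

Lemma residue_sum_is_zmod_morphism : zmod_morphism residue_sum.
Proof.
move=> p q; set B := maxn (size p) (size q).
rewrite !(@residue_sum_widen B) ?leq_maxl ?leq_maxr //; last first.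
  by rewrite (leq_trans (size_polyD _ _)) // size_polyN.
by rewrite -sumrB; apply: eq_bigr => k _; rewrite coefB.
Qed.

HB.instance Definition _ := GRing.isZmodMorphism.Build {poly R} R residue_sum
  residue_sum_is_zmod_morphism.

Lemma residue_sum_Xn j : residue_sum 'X^j = (cong_mod N r j)%:R.
Proof.
rewrite /residue_sum size_polyXn big_mkcond big_nat_recr //= big_nat_cond big1 => [|k].
  by rewrite add0r coefXn eqxx; case: (cong_mod N r j).
by case/andP=> /andP[_ lt_kj] _; rewrite coefXn (ltn_eqF lt_kj); case: ifP.
Qed.

Lemma residue_sum_natrM c (p : {poly R}) :
  residue_sum (c%:R * p) = c%:R * residue_sum p.
Proof. by rewrite !mulr_natl raddfMn. Qed.

Lemma residue_sum_XnM (p : {poly R}) : residue_sum ('X^N * p) = residue_sum p.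
Proof.
have le_size : (size ('X^N * p)%R <= size p + N)%N.
  by rewrite (leq_trans (size_polyMleq _ _)) // size_polyXn addSn addnC.
rewrite (residue_sum_widen le_size) (big_cat_nat (n := N)) ?leq_addl //=.
rewrite big_nat_cond big1 ?add0r => [|k /andP[/andP[_ lt_kN] _]]; last first.
  by rewrite coefXnM lt_kN.
rewrite -{1}(add0n N) big_addn addnK; apply: eq_big => [k | k _].
  by rewrite cong_modDr.
by rewrite coefXnM ltnNge leq_addl addnK.
Qed.

Lemma residue_sum_Xn_sub1M (p : {poly R}) : residue_sum (('X^N - 1) * p) = 0.
Proof. by rewrite mulrBl mul1r raddfB /= residue_sum_XnM subrr. Qed.

End ResidueSum.

Lemma coef_1subX_exp (R : nzRingType) n k :
  ((1 - 'X) ^+ n : {poly R})`_k = 'C(n, k)%:R * (-1) ^+ k.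
Proof.
elim: n k => [|n IHn] [|k].
- by rewrite expr0 coef1 mul1r.
- by rewrite expr0 coef1 bin0n mul0r.
- by rewrite exprS mulrBl mul1r coefB coefXM IHn subr0 !bin0.
- rewrite exprS mulrBl mul1r coefB coefXM /= !IHn binS natrD mulrDl exprS mulN1r.
  by rewrite !mulrN.
Qed.

Lemma size_1subX_exp (R : nzRingType) n : (size ((1 - 'X) ^+ n : {poly R}) <= n.+1)%N.
Proof. by apply/leq_sizeP => k lt_nk; rewrite coef_1subX_exp bin_small ?mul0r. Qed.

Lemma T2E beta n r : T2 beta n r =
  ((floor_div_pow2m1 beta n)`!%:R)^-1 *
  (residue_sum (2 ^ beta) r ((1 - 'X) ^+ n : {poly int}))%:~R.
Proof.
rewrite /T2 (residue_sum_widen _ _ (size_1subX_exp _ n)) rmorph_sum /=.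
congr (_ * _); apply: eq_bigr => k _.
by rewrite coef_1subX_exp rmorphM rmorphXn rmorphN1 /= rmorph_nat.
Qed.

Lemma subr_expr2n (R : comRingType) (x y : R) a :
  exists h, (x - y) ^+ (2 ^ a) = x ^+ (2 ^ a) - y ^+ (2 ^ a) + 2 * h.
Proof.
elim: a => [|a [h IHa]]; first by exists 0; rewrite mulr0 addr0.
rewrite expnSr !exprM IHa; set X := x ^+ (2 ^ a); set Y := y ^+ (2 ^ a).
by exists (Y * (Y - X) + 2 * h * (X - Y) + 2 * h ^+ 2); ring.
Qed.

Section ExprModuloSquare.
(* Modulo [u ^+ 2 - 2 * u], the ideal (u, 2) squares into 2 (u, 2) and the
   coset [u + 2 R] squares into [2 (u + 2 R)]. *)
Variables (R : comRingType) (u h : R).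

Lemma expr_ideal2 m : exists U V C : R,
  (u + 2 * h) ^+ m.+1 = 2 ^+ m * (u * U + 2 * V) + (u ^+ 2 - 2 * u) * C.
Proof.
elim: m => [|m [U [V [C IHm]]]]; first by exists 1, h, 0; ring.
exists (U + h * U + V), (h * V), (2 ^+ m * U + C * (u + 2 * h)).
by rewrite exprSr IHm [(2 : R) ^+ m.+1]exprS; move: (2 ^+ m) => t; ring.
Qed.

Lemma expr2n_coset j : exists D C : R,
  (u + 2 * h) ^+ (2 ^ j) = 2 ^+ (2 ^ j).-1 * (u + 2 * D) + (u ^+ 2 - 2 * u) * C.
Proof.
elim: j => [|j [D [C IHj]]]; first by exists h, 0; ring.
have pred_exp2S : (2 ^ j.+1).-1 = ((2 ^ j).-1 * 2).+1.
  by rewrite expnS; have := expn_gt0 2 j; lia.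
set c := (2 : R) ^+ (2 ^ j).-1.
exists (u * D + D ^+ 2), (c ^+ 2 + 2 * c * (u + 2 * D) * C + (u ^+ 2 - 2 * u) * C ^+ 2).
rewrite pred_exp2S expnS mulnC exprM IHj [(2 : R) ^+ _.+1]exprS exprM -/c.
by move: c => c; ring.
Qed.

End ExprModuloSquare.

Section ResidueSumExpr.
Variables (N : nat) (r : int) (u h : {poly int}).
Hypothesis u_sq : u ^+ 2 - 2 * u = 'X^N - 1.

Lemma residue_sum_expr_dvd m :
  exists F : int, residue_sum N r ((u + 2 * h) ^+ m.+1) = 2 ^+ m * F.
Proof.
have [U [V [C ->]]] := expr_ideal2 u h m.
rewrite u_sq raddfD /= residue_sum_Xn_sub1M addr0.
rewrite -[2 ^+ m]natrX residue_sum_natrM natrX.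
by eexists.
Qed.

Lemma residue_sum_expr2n_odd j : odd `|residue_sum N r u|%N ->
  exists2 F : int, odd `|F|%N &
    residue_sum N r ((u + 2 * h) ^+ (2 ^ j)) = 2 ^+ (2 ^ j).-1 * F.
Proof.
move=> odd_u; have [D [C ->]] := expr2n_coset u h j.
rewrite u_sq raddfD /= residue_sum_Xn_sub1M addr0.
rewrite -[2 ^+ _]natrX residue_sum_natrM natrX.
exists (residue_sum N r (u + 2 * D)) => //.
by rewrite raddfD /= residue_sum_natrM; move: odd_u; lia.
Qed.

End ResidueSumExpr.

Lemma odd_residue_sum_1subXn q r : (0 < q)%N -> (q%:Z %| r)%Z ->
  odd `|residue_sum (2 * q) r (1 - 'X^q : {poly int})|%N.
Proof.
move=> q_gt0 /dvdzP[t ->]; rewrite raddfB /= -(expr0 'X) !residue_sum_Xn /cong_mod.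
have mod0E d x : (((x %% d)%Z == 0) = (d %| x)%Z) := sameP eqP dvdz_mod0P.
have q_neq0 : q%:Z != 0 by rewrite -lt0n.
rewrite !mod0E sub0r rpredN PoszM dvdz_mul2r // -{1}(mul1r q%:Z) -mulrBl dvdz_mul2r //.
have -> : (2 %| 1 - t)%Z = ~~ (2 %| t)%Z by lia.
by case: (2 %| t)%Z.
Qed.

Lemma residue_sum_1subX_exp alpha m r : (0 < m)%N -> ((2 ^ alpha)%:Z %| r)%Z ->
  exists F : int,
    residue_sum (2 ^ alpha.+1) r ((1 - 'X) ^+ (m * 2 ^ alpha)) = 2 ^+ m.-1 * F /\
    ((2%N).-nat m -> odd `|F|%N).
Proof.
move=> m_gt0 dvd_r; have [h eq_h] := subr_expr2n 1 ('X : {poly int}) alpha.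
set q := (2 ^ alpha)%N in eq_h dvd_r *.
have u_sq : (1 - 'X^q) ^+ 2 - 2 * (1 - 'X^q) = 'X^(2 * q) - 1 :> {poly int}.
  by rewrite mulnC exprM; ring.
rewrite expnS [(m * q)%N]mulnC exprM eq_h expr1n.
case: (boolP ((2%N).-nat m)) => [/p_natP[j ->] | _].
  have [F odd_F ->] := residue_sum_expr2n_odd h u_sq j
    (odd_residue_sum_1subXn (expn_gt0 2 alpha) dvd_r).
  by exists F.
case: m m_gt0 => // m _; have [F ->] := residue_sum_expr_dvd r h u_sq m.
by exists F; split=> // /negP.
Qed.

Lemma ord2_div_odd (a b : int) : odd `|b|%N ->
  ord2 (a%:~R / b%:~R) = (logn 2 `|a|%N)%:Z.
Proof.
case: divqP => [_ _ // | k x _]; rewrite !abszM !oddM => /andP[odd_k odd_den].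
rewrite /ord2 (logn2_odd odd_den) subr0.
have [-> | num_neq0] := eqVneq (numq x) 0; first by rewrite muln0.
have k_neq0 : k != 0 by apply: contraTneq odd_k => ->.
by rewrite lognM ?absz_gt0 // (logn2_odd odd_k).
Qed.

Lemma rat_cong2_div_odd (a b : int) : odd `|b|%N ->
  rat_cong2 (a%:~R / b%:~R) 1 <-> odd `|a|%N.
Proof.
move=> odd_b; have b_neq0 : b%:~R != 0 :> rat.
  by rewrite intr_eq0; apply: contraTneq odd_b => ->.
rewrite /rat_cong2 (_ : a%:~R / b%:~R - 1 = (a - b)%:~R / b%:~R); last first.
  by rewrite rmorphB /= mulrBl divff.
rewrite ord2_div_odd // mulf_eq0 invr_eq0 (negbTE b_neq0) orbF intr_eq0.
rewrite lez_nat logn_gt0 mem_primes absz_gt0.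
split=> [[/eqP | /and3P[_ _]] | odd_a]; move: odd_b; try lia.
have [-> | ne] := eqVneq (a - b) 0; [by left | right].
by apply/and3P; split=> //; move: odd_a; lia.
Qed.

Lemma rat_cong2_div_fact m (F : int) : (0 < m)%N ->
  rat_cong2 ((m`!)%:R^-1 * (2 ^+ m.-1 * F)%:~R) 1 <-> (2%N).-nat m /\ odd `|F|%N.
Proof.
move=> m_gt0; have [o odd_o fact_m] := pfactor_coprime (isT : prime 2) (fact_gt0 m).
rewrite coprime2n in odd_o; have [le_e eq_e] := logn2_fact_leqif m_gt0.
set e := logn 2 m`! in fact_m le_e eq_e.
have o_neq0 : o%:R != 0 :> rat by rewrite pnatr_eq0; apply: contraTneq odd_o => ->.
have -> : (m`!)%:R^-1 * (2 ^+ m.-1 * F)%:~R =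
           (2 ^+ (m.-1 - e) * F)%:~R / (o%:Z)%:~R :> rat.
  rewrite fact_m natrM -{1}(subnK (_ : e <= m.-1)%N); last by move: le_e; lia.
  rewrite exprD !rmorphM /= !rmorphXn /= natrX; field.
  by rewrite o_neq0 expf_neq0.
rewrite rat_cong2_div_odd ?absz_nat // abszM abszX oddM oddX /= orbF -eq_e.
have -> : (m.-1 - e == 0)%N = (e.+1 == m) by move: le_e; lia.
by split=> /andP.
Qed.

Theorem lemma4p2 (alpha n : nat) (r : int) :
  (0 < n)%N ->
  (2 ^ alpha %| n)%N ->
  ((2 ^ alpha)%:Z %| r)%Z ->
  (rat_cong2 (T2 alpha.+1 n r) 1 <-> exists m : nat, n = (2 ^ m)%N).
Proof.
move=> n_gt0 /dvdnP[m n_eq] dvd_r; subst n.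
have m_gt0 : (0 < m)%N by move: n_gt0; rewrite muln_gt0 => /andP[].
have floor_m : floor_div_pow2m1 alpha.+1 (m * 2 ^ alpha) = m.
  by rewrite /floor_div_pow2m1 expnS mulnCA mulnK // muln_gt0 expn_gt0.
have [F [eq_F odd_F]] := residue_sum_1subX_exp m_gt0 dvd_r.
have two_n : (2%N).-nat (m * 2 ^ alpha)%N = (2%N).-nat m.
  by rewrite pnatM pnatX pnat_id //= andbT.
rewrite T2E floor_m eq_F rat_cong2_div_fact //.
split=> [[two_m _] | /(pnat_expP _ (isT : prime 2))].
  by apply/(pnat_expP _ (isT : prime 2)); rewrite two_n.
by rewrite two_n => two_m; split=> //; apply: odd_F.
Qed.
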